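(* Let $S_0$ be the equivalence relation on $\mathcal M$ whose classes are the hyperplanes $\Sigma_t$, $t\in\mathbb R$; that is, $S_0((t,\vec x),(t',\vec x'))\iff t=t'$. Then: (a) $S_0$ is a non-trivial $\mathtt{IGal}$-invariant equivalence relation. It is the unique non-trivial $\mathtt{IGal}$-invariant equivalence relation $S$ on $\mathcal M$ such that every equivalence class of $S$ meets every Galilean worldline in at most one point. Here a Galilean worldline is the graph $\{(t,\vec x(t)):t\in I\}$ of a piecewise differentiable map $\vec x:I\to\mathbb R^3$ defined on an interval $I\subseteq\mathbb R$. (b) $S_0$ is also the unique non-trivial $\mathtt{IGal}$-invariant equivalence relation on $\mathcal M$ all of whose equivalence classes are connected subsets of $\mathbb R^4$.
   Context: Spacetime is $\mathcal M=\mathbb R^4$, with points written $(t,\vec x)$, $t\in\mathbb R$, $\vec x\in\mathbb R^3$. For $t\in\mathbb R$ let $\Sigma_t:=\{(t,\vec x):\vec x\in\mathbb R^3\}$. $\mathtt{IGal}$ is the group of bijections of $\mathbb R^4$ of the form $(t,\vec x)\mapsto(t+b,\;R\vec x+\vec v\,t+\vec a)$ with $R\in\mathtt{SO}(3)$, $\vec v,\vec a\in\mathbb R^3$ and $b\in\mathbb R$. An equivalence relation $S$ on $\mathcal M$ is $G$-invariant if $S(p,q)\Leftrightarrow S(g\cdot p,g\cdot q)$ for all $g\in G$ and all $p,q$. It is non-trivial if it is neither the one-class relation (single class $\mathcal M$) nor the equality relation (all classes singletons). *)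

From HB Require Import structures.
From mathcomp Require Import all_boot all_order all_algebra.
From mathcomp Require Import all_classical all_reals all_analysis.
Set Implicit Arguments. Unset Strict Implicit. Unset Printing Implicit Defensive.
Import Order.TTheory GRing.Theory Num.Theory.
Import numFieldNormedType.Exports.
Local Open Scope classical_set_scope.
Local Open Scope ring_scope.

Section Galilei.
Variable R : realType.

Definition stpoint := (R * 'cV[R]_3)%type.

Definition SO3 (Q : 'M[R]_3) : Prop := Q^T *m Q = 1%:M /\ \det Q = 1.

Definition igal_act (Q : 'M[R]_3) (v a : 'cV[R]_3) (b : R) (p : stpoint) : stpoint :=
  (p.1 + b, Q *m p.2 + p.1 *: v + a).

Definition is_equivalence (S : stpoint -> stpoint -> Prop) : Prop :=
  (forall p, S p p) /\ (forall p q, S p q -> S q p) /\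
  (forall p q r, S p q -> S q r -> S p r).

Definition nontrivial (S : stpoint -> stpoint -> Prop) : Prop :=
  ~ (forall p q, S p q) /\ ~ (forall p q, S p q -> p = q).

Definition IGal_invariant (S : stpoint -> stpoint -> Prop) : Prop :=
  forall Q v a b, SO3 Q -> forall p q, S p q <-> S (igal_act Q v a b p) (igal_act Q v a b q).

Definition eqclass (S : stpoint -> stpoint -> Prop) (p : stpoint) : set stpoint := [set q | S p q].

Definition S0 (p q : stpoint) : Prop := p.1 = q.1.

Definition is_interval (I : set R) : Prop :=
  forall a b c, I a -> I b -> a <= c -> c <= b -> I c.

Definition piecewise_differentiable (I : set R) (f : R -> 'cV[R]_3) : Prop :=
  {within I, continuous f} /\
  forall a b, I a -> I b ->
    exists s : seq R, forall t, a < t -> t < b -> t \notin s -> derivable f t 1.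

Definition galilean_worldline (W : set stpoint) : Prop :=
  exists (I : set R) (f : R -> 'cV[R]_3),
    is_interval I /\ piecewise_differentiable I f /\ W = [set (t, f t) | t in I].

Definition classes_meet_worldlines_at_most_once (S : stpoint -> stpoint -> Prop) : Prop :=
  forall W, galilean_worldline W ->
    forall p q r, eqclass S p q -> eqclass S p r -> W q -> W r -> q = r.

Definition classes_connected (S : stpoint -> stpoint -> Prop) : Prop :=
  forall p, connected (eqclass S p).

Definition same_relation (S T : stpoint -> stpoint -> Prop) : Prop :=
  forall p q, S p q <-> T p q.

End Galilei.

From HB Require Import structures.
From mathcomp Require Import all_boot all_order all_algebra.
From mathcomp Require Import all_classical all_reals all_analysis.
From mathcomp Require Import ring lra.

(* Translations and rotations show that an invariant equivalence relating two
   distinct simultaneous points relates every pair of simultaneous points, so a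
   non-trivial invariant S equals S0 as soon as it relates only simultaneous
   points.  Relating points at distinct times is excluded in (a) by the straight
   worldline through them, which would meet one class twice; in (b) the times
   occurring in the class of the origin form an interval, a boost spreads each of
   them over its whole time slice, and additivity of these times then makes S
   the one-class relation. *)

Set Implicit Arguments.
Unset Strict Implicit.
Unset Printing Implicit Defensive.
Import Order.TTheory GRing.Theory Num.Theory.
Import numFieldNormedType.Exports.
Local Open Scope classical_set_scope.
Local Open Scope ring_scope.

Lemma det_mx33 (R : comNzRingType) (A : 'M[R]_3) : \det A =
  A 0 0 * (A 1 1 * A 2 2 - A 1 2 * A 2 1) - A 0 1 * (A 1 0 * A 2 2 - A 1 2 * A 2 0)
  + A 0 2 * (A 1 0 * A 2 1 - A 1 1 * A 2 0).
Proof.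
do 3!rewrite !(expand_det_row _ ord0) /cofactor !big_ord_recl !big_ord0 /=.
rewrite !det_mx00 !mxE /=.
pose f (i j : nat) := A (inord i) (inord j).
have Af (i j : 'I_3) : A i j = f i j by rewrite /f !inord_val.
rewrite !Af /=; clearbody f.
rewrite /bump /= ?(addn0, add0n, addn1, add1n) /=.
have -> : (1 %% 3 = 1)%N by [].
have -> : ((1 + 1) %% 3 = 2)%N by [].
ring.
Qed.

Section Coordinates3.
Variable R : comNzRingType.

Definition col3 (x y z : R) : 'cV[R]_3 :=
  \col_(i < 3) match nat_of_ord i with O => x | S O => y | _ => z end.

(* the rotation of angle theta about the third axis, (a, b) = (cos theta, sin theta) *)
Definition rot3 (a b : R) : 'M[R]_3 :=
  \matrix_(i < 3, j < 3)
    match nat_of_ord i, nat_of_ord j with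
    | O, O => a | O, S O => - b | S O, O => b | S O, S O => a
    | S (S O), S (S O) => 1 | _, _ => 0
    end.

Definition cycle3 : 'M[R]_3 :=
  \matrix_(i < 3, j < 3)
    match nat_of_ord i, nat_of_ord j with
    | O, S O => 1 | S O, S (S O) => 1 | S (S O), O => 1 | _, _ => 0
    end.

Ltac case_ord3 i := let Hi := fresh in case: i => [[|[|[|?]]] Hi] //=.

Lemma col3E (w : 'cV[R]_3) : w = col3 (w 0 0) (w 1 0) (w 2 0).
Proof.
apply/matrixP => i j; rewrite !mxE (ord1 j).
by case_ord3 i; congr (w _ _); apply/val_inj.
Qed.

Lemma add_col3 x y z x' y' z' :
  col3 x y z + col3 x' y' z' = col3 (x + x') (y + y') (z + z').
Proof. by apply/matrixP => i j; rewrite !mxE; case_ord3 i. Qed.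

Lemma opp_col3 x y z : - col3 x y z = col3 (- x) (- y) (- z).
Proof. by apply/matrixP => i j; rewrite !mxE; case_ord3 i. Qed.

Lemma col30 : col3 0 0 0 = 0.
Proof. by apply/matrixP => i j; rewrite !mxE; case_ord3 i. Qed.

Lemma mul_rot3_col3 a b x y z :
  rot3 a b *m col3 x y z = col3 (a * x - b * y) (b * x + a * y) z.
Proof.
apply/matrixP => i j; rewrite !mxE !big_ord_recl big_ord0 !mxE /=.
case_ord3 i; ring.
Qed.

Lemma mul_cycle3_col3 x y z : cycle3 *m col3 x y z = col3 y z x.
Proof.
apply/matrixP => i j; rewrite !mxE !big_ord_recl big_ord0 !mxE /=.
case_ord3 i; ring.
Qed.

End Coordinates3.

Arguments cycle3 {R}.

Section Rotations.
Variable R : realType.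

Lemma SO3_1 : SO3 (1%:M : 'M[R]_3).
Proof. by split; [rewrite trmx1 mulmx1 | rewrite det1]. Qed.

Lemma SO3_rot3 (a b : R) : a * a + b * b = 1 -> SO3 (rot3 a b).
Proof.
move=> ab1; split; last first.
  by rewrite det_mx33 !mxE /= -[RHS]ab1; ring.
apply/matrixP => i j; rewrite !mxE !big_ord_recl big_ord0 !mxE /=.
by case: i j => [[|[|[|?]]] ?] [[|[|[|?]]] ?] //=;
  first [ring | rewrite -[RHS]ab1; ring].
Qed.

Lemma SO3_cycle3 : SO3 (@cycle3 R).
Proof.
split; last by rewrite det_mx33 !mxE /=; ring.
apply/matrixP => i j; rewrite !mxE !big_ord_recl big_ord0 !mxE /=.
by case: i j => [[|[|[|?]]] ?] [[|[|[|?]]] ?] //=; ring.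
Qed.

End Rotations.

Arguments SO3_1 {R}.

Lemma add_closed_everywhere (R : archiRealFieldType) (P : R -> Prop) (c : R) :
  0 < c -> (forall x y, P x -> P y -> P (x + y)) ->
  (forall s, `|s| <= c -> P s) -> forall s, P s.
Proof.
move=> c_gt0 PD Pc s.
have P0 : P 0 by apply: Pc; rewrite normr0 ltW.
have s_ge0 : 0 <= `|s| / c by rewrite divr_ge0 // ltW.
have := archi_boundP s_ge0; set n := Num.Def.archi_bound _ => s_lt_n.
have n_gt0 : 0 < n%:R :> R by apply: le_lt_trans s_lt_n.
have Ps_n : P (s / n%:R).
  apply: Pc; rewrite normrM normfV (gtr0_norm n_gt0) ler_pdivrMr //.
  by rewrite -ler_pdivrMl // mulrC ltW.
have Pmul k : P (s / n%:R *+ k).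
  by elim: k => [|k IH]; [rewrite mulr0n | rewrite mulrS; apply: PD].
by have := Pmul n; rewrite -mulr_natr divfK // lt0r_neq0.
Qed.

Section Invariance.
Variable R : realType.
Variable S : stpoint R -> stpoint R -> Prop.
Hypothesis S_inv : IGal_invariant S.

Lemma IGal_shift p q b a : S p q <-> S (p.1 + b, p.2 + a) (q.1 + b, q.2 + a).
Proof.
by have := S_inv 0 a b SO3_1 p q; rewrite /igal_act !mul1mx !scaler0 !addr0.
Qed.

Lemma IGal_boost p q v : S p q <-> S (p.1, p.2 + p.1 *: v) (q.1, q.2 + q.1 *: v).
Proof. by have := S_inv v 0 0 SO3_1 p q; rewrite /igal_act !mul1mx !addr0. Qed.

Lemma IGal_rot Q p q : SO3 Q -> S p q <-> S (p.1, Q *m p.2) (q.1, Q *m q.2).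
Proof.
by move=> SO3Q; have := S_inv 0 0 0 SO3Q p q; rewrite /igal_act !scaler0 !addr0.
Qed.

Definition spatial_rel (w : 'cV[R]_3) := S (0, 0) (0, w).

Definition temporal_rel (s : R) := forall w, S (0, 0) (s, w).

Lemma simultaneous_relE t x y : S (t, x) (t, y) <-> spatial_rel (y - x).
Proof.
by rewrite /spatial_rel (IGal_shift (0, 0) (0, y - x) t x) /= !add0r subrK.
Qed.

Hypotheses (S_refl : forall p, S p p) (S_sym : forall p q, S p q -> S q p)
  (S_trans : forall p q r, S p q -> S q r -> S p r).

Lemma spatial_relD u w : spatial_rel u -> spatial_rel w -> spatial_rel (u + w).
Proof.
move=> Su Sw; apply: S_trans Su _.
by apply/simultaneous_relE; rewrite addrAC subrr add0r.
Qed.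

Lemma spatial_relN w : spatial_rel w -> spatial_rel (- w).
Proof.
by move=> Sw; have := (simultaneous_relE 0 w 0).1 (S_sym Sw); rewrite sub0r.
Qed.

Lemma spatial_rel_rot Q w : SO3 Q -> spatial_rel w -> spatial_rel (Q *m w).
Proof.
by move=> SO3Q; rewrite /spatial_rel (IGal_rot (0, 0) (0, w) SO3Q) /= mulmx0.
Qed.

Lemma spatial_rel_cycle x y z : spatial_rel (col3 x y z) -> spatial_rel (col3 y z x).
Proof.
by move=> Sw; rewrite -mul_cycle3_col3; apply: spatial_rel_rot Sw; apply: SO3_cycle3.
Qed.

Lemma spatial_rel_double3 x y z :
  spatial_rel (col3 x y z) -> spatial_rel (col3 0 0 (z + z)).
Proof.
move=> Sw; have half_turn : (-1) * (-1) + 0 * 0 = 1 :> R by ring.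
have := spatial_relD Sw (spatial_rel_rot (SO3_rot3 half_turn) Sw).
by rewrite mul_rot3_col3 add_col3; congr (spatial_rel (col3 _ _ _)); ring.
Qed.

Lemma spatial_rel_axis d :
  d != 0 -> spatial_rel d -> exists2 c, 0 < c & spatial_rel (col3 c 0 0).
Proof.
rewrite [d]col3E; set x := d 0 0; set y := d 1 0; set z := d 2 0 => d_neq0 Sd.
have [e e_neq0 Se] : exists2 e, e != 0 & spatial_rel (col3 0 0 e).
  have double_neq0 (r : R) : r != 0 -> r + r != 0.
    by move=> r_neq0; rewrite -mulr2n mulrn_eq0 negb_or r_neq0.
  have [x0|] := eqVneq x 0; last first.
    by exists (x + x);
       [exact: double_neq0 | exact: spatial_rel_double3 (spatial_rel_cycle Sd)].
  have [y0|] := eqVneq y 0; last first.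
    by exists (y + y); [exact: double_neq0
       | exact: spatial_rel_double3 (spatial_rel_cycle (spatial_rel_cycle Sd))].
  have [z0|] := eqVneq z 0; last first.
    by exists (z + z); [exact: double_neq0 | exact: spatial_rel_double3 Sd].
  by move: d_neq0; rewrite x0 y0 z0 col30 eqxx.
have Se' := spatial_rel_cycle (spatial_rel_cycle Se).
have [e_ge0|e_lt0] := leP 0 e; first by exists e; rewrite // lt0r e_neq0.
by exists (- e); [rewrite oppr_gt0 | rewrite -oppr0 -opp_col3; apply: spatial_relN].
Qed.

(* Rotating (c, 0, 0) about the third axis by the angles +theta and -theta with
   cos theta = s / 2c and adding gives (s, 0, 0). *)
Lemma spatial_rel_axis_all c :
  0 < c -> spatial_rel (col3 c 0 0) -> forall s, spatial_rel (col3 s 0 0).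
Proof.
move=> c_gt0 Sc; apply: (add_closed_everywhere c_gt0).
  by move=> x y Sx Sy; have := spatial_relD Sx Sy; rewrite add_col3 !addr0.
move=> s s_le_c; pose a := s / (c *+ 2).
have c2_gt0 : 0 < c *+ 2 by rewrite mulrn_wgt0.
have : `|a| <= 1.
  by rewrite normrM normfV (gtr0_norm c2_gt0) ler_pdivrMr // mul1r mulr2n; lra.
rewrite ler_norml => /andP[a_ge a_le].
pose b := Num.sqrt (1 - a * a).
have ab1 : a * a + b * b = 1.
  rewrite /b -(expr2 (Num.sqrt _)) sqr_sqrtr; first by rewrite addrC subrK.
  have -> : 1 - a * a = (1 - a) * (a + 1) by ring.
  by apply: mulr_ge0; lra.
have abN1 : a * a + (- b) * (- b) = 1 by rewrite mulrNN.
have := spatial_relD (spatial_rel_rot (SO3_rot3 ab1) Sc)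
                     (spatial_rel_rot (SO3_rot3 abN1) Sc).
rewrite !mul_rot3_col3 add_col3; congr (spatial_rel (col3 _ _ _)); last by ring.
  by rewrite /a mulr2n; field; rewrite -mulr2n lt0r_neq0.
by ring.
Qed.

Lemma spatial_rel_all d : d != 0 -> spatial_rel d -> forall w, spatial_rel w.
Proof.
move=> d_neq0 Sd; have [c c_gt0 Sc] := spatial_rel_axis d_neq0 Sd.
have Saxis := spatial_rel_axis_all c_gt0 Sc.
move=> w; rewrite [w]col3E.
have -> : col3 (w 0 0) (w 1 0) (w 2 0) =
    col3 (w 0 0) 0 0 + col3 0 (w 1 0) 0 + col3 0 0 (w 2 0).
  by rewrite !add_col3 !addr0 !add0r.
apply: spatial_relD; first apply: spatial_relD.
- exact: Saxis.
- exact: spatial_rel_cycle (spatial_rel_cycle (Saxis _)).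
- exact: spatial_rel_cycle (Saxis _).
Qed.

Lemma temporal_rel_of tau w : tau != 0 -> S (0, 0) (tau, w) -> temporal_rel tau.
Proof.
move=> tau_neq0 Sw w'.
have := (IGal_boost (0, 0) (tau, w) (tau^-1 *: (w' - w))).1 Sw.
by rewrite /= scale0r addr0 scalerA mulfV // scale1r addrC subrK.
Qed.

Lemma temporal_rel_of_rel p q : p.1 != q.1 -> S p q -> temporal_rel (q.1 - p.1).
Proof.
move=> pq_neq Spq; apply: (@temporal_rel_of _ (q.2 - p.2)).
  by rewrite subr_eq0 eq_sym.
by have := (IGal_shift p q (- p.1) (- p.2)).1 Spq; rewrite !subrr.
Qed.

Lemma temporal_relD s s' : temporal_rel s -> temporal_rel s' -> temporal_rel (s + s').
Proof.
move=> Ss Ss' w; apply: S_trans (Ss 0) _.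
have := (IGal_shift (0, 0) (s', w) s 0).1 (Ss' w).
by rewrite /= !add0r !addr0 (addrC s').
Qed.

Lemma temporal_relN s : temporal_rel s -> temporal_rel (- s).
Proof.
move=> Ss w; have := (IGal_shift (s, - w) (0, 0) (- s) w).1 (S_sym (Ss (- w))).
by rewrite /= subrr addNr !add0r.
Qed.

Hypothesis class0_connected : connected (eqclass S (0, 0)).

(* The times of the points of the class of the origin form an interval, and a
   boost makes every nonzero time in it fully related. *)
Lemma temporal_rel_interval tau :
  temporal_rel tau -> forall s, 0 <= s <= `|tau| -> temporal_rel s.
Proof.
move=> Stau s /andP[s_ge0 s_le].
have [->|s_neq0] := eqVneq s 0.
  by have := temporal_relD Stau (temporal_relN Stau); rewrite subrr.
have Sabs : temporal_rel `|tau|.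
  by have [tau_ge0|tau_lt0] := leP 0 tau;
    [rewrite ger0_norm | rewrite ltr0_norm //; apply: temporal_relN].
have fst_cont : {within eqclass S (0, 0), continuous (@fst R 'cV[R]_3)}.
  by apply: continuous_subspaceT => x; exact: cvg_fst.
have /connected_intervalP times_itv :=
  connected_continuous_connected class0_connected fst_cont.
have [[s' w] Sw /= s'E] : (fst @` eqclass S (0, 0)) s.
  apply: (times_itv 0 `|tau|); first by exists (0, 0); [apply: S_refl|].
    by exists (`|tau|, 0); [apply: Sabs|].
  by rewrite s_ge0 s_le.
by rewrite -s'E in s_neq0 *; exact: temporal_rel_of s_neq0 Sw.
Qed.

Lemma temporal_rel_all tau : tau != 0 -> temporal_rel tau -> forall s, temporal_rel s.
Proof.
move=> tau_neq0 Stau; have Sint := temporal_rel_interval Stau.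
apply: (add_closed_everywhere (c := `|tau|)) => //.
- by rewrite normr_gt0.
- exact: temporal_relD.
move=> s s_le; have [s_ge0|s_lt0] := leP 0 s.
  by apply: Sint; rewrite s_ge0 -(ger0_norm s_ge0).
rewrite -(opprK s); apply: temporal_relN; apply: Sint.
by rewrite oppr_ge0 ltW // -(ltr0_norm s_lt0).
Qed.

End Invariance.

Section Uniqueness.
Variable R : realType.
Implicit Types S : stpoint R -> stpoint R -> Prop.

Lemma S0_of_simultaneous S :
  is_equivalence S -> nontrivial S -> IGal_invariant S ->
  (forall p q, S p q -> p.1 = q.1) -> same_relation S (@S0 R).
Proof.
move=> [_ [S_sym S_trans]] [_ S_neq] S_inv S_sim [t x] [t' y].
split; first exact: S_sim.
rewrite /S0 /= => <-.
have [[t0 x0] [[t0' y0] [S_xy xy_neq]]] : exists p q, S p q /\ p <> q.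
  apply: contrapT => no_pair; apply: S_neq => p q Spq.
  by apply: contrapT => pq_neq; apply: no_pair; exists p, q.
have /= t0E := S_sim _ _ S_xy; subst t0'.
have d_neq0 : y0 - x0 != 0.
  by rewrite subr_eq0; apply/eqP => y0E; apply: xy_neq; rewrite y0E.
have S_d := (simultaneous_relE S_inv t0 x0 y0).1 S_xy.
apply/(simultaneous_relE S_inv).
exact: (spatial_rel_all S_inv S_sym S_trans d_neq0 S_d (y - x)).
Qed.

Lemma line_worldline (k c : 'cV[R]_3) :
  galilean_worldline [set (t, t *: k + c) | t in [set: R]].
Proof.
have f_der t : derivable (fun t : R => t *: k + c) t 1.
  apply/derivable1_diffP; apply: differentiableD; last exact: differentiable_cst.
  exact: differentiableZl.
exists [set: R], (fun t => t *: k + c); split => //; split => //; split.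
  apply: continuous_subspaceT => t.
  by apply: differentiable_continuous; apply/derivable1_diffP.
by move=> a b _ _; exists [::].
Qed.

Lemma simultaneous_of_worldlines S :
  (forall p, S p p) -> classes_meet_worldlines_at_most_once S ->
  forall p q, S p q -> p.1 = q.1.
Proof.
move=> S_refl S_once [t x] [t' y] Sxy /=; apply: contrapT => tt'_neq.
have dt_neq0 : t' - t != 0.
  by rewrite subr_eq0; apply/eqP => t'E; apply: tt'_neq.
pose k := (t' - t)^-1 *: (y - x).
have on_line s z : z = s *: k + (x - t *: k) ->
    [set (s, s *: k + (x - t *: k)) | s in [set: R]] (s, z).
  by move=> ->; exists s.
suff : (t, x) = (t', y) by case=> /tt'_neq.
apply: (S_once _ (line_worldline k (x - t *: k)) (t, x)).
- exact: S_refl.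
- exact: Sxy.
- by apply: on_line; rewrite addrC subrK.
- by apply: on_line; rewrite addrCA -scalerBl /k scalerA mulfV // scale1r addrC subrK.
Qed.

Lemma simultaneous_of_connected S :
  is_equivalence S -> nontrivial S -> IGal_invariant S -> classes_connected S ->
  forall p q, S p q -> p.1 = q.1.
Proof.
move=> [S_refl [S_sym S_trans]] [S_not_full _] S_inv S_conn p q Spq.
apply: contrapT => /eqP pq_neq.
have dt_neq0 : q.1 - p.1 != 0 by rewrite subr_eq0 eq_sym.
have S_time := temporal_rel_all S_inv S_refl S_sym S_trans (S_conn (0, 0)) dt_neq0
  (temporal_rel_of_rel S_inv pq_neq Spq).
apply: S_not_full => p' q'.
have := (IGal_shift S_inv (0, 0) (q'.1 - p'.1, q'.2 - p'.2) p'.1 p'.2).1 (S_time _ _).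
by rewrite /= !add0r !subrK -!surjective_pairing.
Qed.

Lemma S0_equivalence : is_equivalence (@S0 R).
Proof. by split; [|split] => [p|p q|p q r] //; rewrite /S0 => ->. Qed.

Lemma S0_nontrivial : nontrivial (@S0 R).
Proof.
split.
  by move/(_ (0, 0) (1, 0)); rewrite /S0 /= => /esym/eqP; rewrite oner_eq0.
move/(_ (0, 0) (0, const_mx 1) erefl)/(congr1 (fun p : stpoint R => p.2 0 0)).
by rewrite /= !mxE => /esym/eqP; rewrite oner_eq0.
Qed.

Lemma S0_IGal_invariant : IGal_invariant (@S0 R).
Proof. by move=> Q v a b _ p q; rewrite /S0 /=; split => [->|/addIr]. Qed.

Lemma S0_meets_worldlines_at_most_once :
  classes_meet_worldlines_at_most_once (@S0 R).
Proof.
move=> W [I [f [_ [_ ->]]]] p q r Spq Spr [t _ qE] [t' _ rE]; subst q r.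
by move: Spq Spr; rewrite /eqclass /S0 /= => <- <-.
Qed.

(* A time slice is the union of the segments joining (t, 0) to its points. *)
Lemma S0_classes_connected : classes_connected (@S0 R).
Proof.
move=> p; have -> : eqclass (@S0 R) p =
    \bigcup_(w in [set: 'cV[R]_3]) ((fun s : R => (p.1, s *: w)) @` `[0, 1]%classic).
  apply/seteqP; split => [[t x]|q [w _ [s _ <-]] //].
  rewrite /eqclass /S0 /= => <-.
  by exists x => //; exists 1; rewrite ?scale1r //= in_itv /= lexx ler01.
apply: bigcup_connected.
  by exists (p.1, 0) => w _; exists 0; rewrite ?scale0r //= in_itv /= lexx ler01.
move=> w _; apply: connected_continuous_connected; first exact: segment_connected.
apply: continuous_subspaceT => s.
exact: (cvg_pair (cvg_cst p.1) (@scalel_continuous R _ w s)).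
Qed.

End Uniqueness.

Theorem theorem3 (R : realType) :
  (* (a) *)
  (is_equivalence (@S0 R) /\ nontrivial (@S0 R) /\ IGal_invariant (@S0 R) /\
   classes_meet_worldlines_at_most_once (@S0 R) /\
   (forall S : stpoint R -> stpoint R -> Prop,
      is_equivalence S -> nontrivial S -> IGal_invariant S ->
      classes_meet_worldlines_at_most_once S -> same_relation S (@S0 R)))
  /\
  (* (b) *)
  (classes_connected (@S0 R) /\
   (forall S : stpoint R -> stpoint R -> Prop,
      is_equivalence S -> nontrivial S -> IGal_invariant S ->
      classes_connected S -> same_relation S (@S0 R))).
Proof.
split; last split.
- split; first exact: S0_equivalence.
  split; first exact: S0_nontrivial.
  split; first exact: S0_IGal_invariant.
  split; first exact: S0_meets_worldlines_at_most_once.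
  move=> S S_eqv S_nt S_inv S_once; apply: S0_of_simultaneous => //.
  exact: simultaneous_of_worldlines (proj1 S_eqv) S_once.
- exact: S0_classes_connected.
- move=> S S_eqv S_nt S_inv S_conn; apply: S0_of_simultaneous => //.
  exact: simultaneous_of_connected.
Qed.
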